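(* Let $\mathbb F$ be an infinite field and $\mathcal F$ a sheaf of finite-dimensional $\mathbb F$-vector spaces on a digraph $G$ such that $\dim\mathcal F(e)\le1$ for every $e\in E_G$. Then $h_1^{\rm twist}(\mathcal F)={\rm m.e.}(\mathcal F)$.
   Context: A digraph has finite vertex and edge sets with tail/head maps $t_G,h_G$. A sheaf $\mathcal F$ on $G$: finite-dimensional vector spaces $\mathcal F(P)$, $P\in V_G\sqcup E_G$, linear maps $\mathcal F(t,e)\colon\mathcal F(e)\to\mathcal F(t_Ge)$, $\mathcal F(h,e)\colon\mathcal F(e)\to\mathcal F(h_Ge)$; $\mathcal F(V)=\bigoplus_v\mathcal F(v)$, $\mathcal F(E)=\bigoplus_e\mathcal F(e)$; $d_h,d_t\colon\mathcal F(E)\to\mathcal F(V)$ send the summand $\mathcal F(e)$ into $\mathcal F(h_Ge)$ resp. $\mathcal F(t_Ge)$ via the restriction maps, $d=d_h-d_t$, $H_1=\ker d$. Twisting: with independent indeterminates $\psi(e)$, $e\in E_G$, $\mathcal F^\psi$ is the sheaf of $\mathbb F(\psi)$-vector spaces with values $\mathcal F(P)\otimes_{\mathbb F}\mathbb F(\psi)$, head maps $\mathcal F(h,e)$, tail maps $\psi(e)\mathcal F(t,e)$; $h_1^{\rm twist}(\mathcal F)=\dim_{\mathbb F(\psi)}H_1(\mathcal F^\psi)$. For $U\subset\mathcal F(V)$, $\Gamma_{\rm ht}(U)=\bigoplus_e\{w\in\mathcal F(e):d_hw\in U,d_tw\in U\}$, ${\rm excess}(\mathcal F,U)=\dim\Gamma_{\rm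 ht}(U)-\dim U$, ${\rm m.e.}(\mathcal F)=\max_U{\rm excess}(\mathcal F,U)$. *)

From HB Require Import structures.
From mathcomp Require Import all_boot all_order all_algebra.
Set Implicit Arguments. Unset Strict Implicit. Unset Printing Implicit Defensive.
Import GRing.Theory.
Local Open Scope ring_scope.

(* ---------- Sheaves on a digraph (t, h : E -> V), in coordinates ----------
   F(V) = (+)_v F(v) is realised as row vectors 'rV_nV whose coordinate j
   belongs to the summand F(vtx j); likewise F(E) = 'rV_nE with coordinate i
   in the summand F(etx i).  (This is just a choice of bases of all stalks.)
   The restriction maps F(h,e), F(t,e) are assembled into the matrices
   resH, resT : 'M_(nE, nV) (acting on row vectors: w |-> w *m resH), which
   send the summand F(e) into F(h e) resp. F(t e) -- the support conditions. *)
Record sheaf (F : fieldType) (V E : finType) (t h : E -> V) := Sheaf {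
  nV : nat;
  nE : nat;
  vtx : 'I_nV -> V;
  etx : 'I_nE -> E;
  resH : 'M[F]_(nE, nV);
  resT : 'M[F]_(nE, nV);
  resH_supp : forall i j, vtx j != h (etx i) -> resH i j = 0;
  resT_supp : forall i j, vtx j != t (etx i) -> resT i j = 0
}.
Arguments nV {F V E t h} s.
Arguments nE {F V E t h} s.
Arguments vtx {F V E t h} s _.
Arguments etx {F V E t h} s _.
Arguments resH {F V E t h} s.
Arguments resT {F V E t h} s.

Section SheafDefs.
Variables (F : fieldType) (V E : finType) (t h : E -> V) (S : sheaf F t h).

Definition stalk_dimE (e : E) : nat := #|[set i | etx S i == e]|.

Definition dmx : 'M[F]_(nE S, nV S) := resH S - resT S.
Definition h1 : nat := \rank (kermx dmx).

Definition edge_space (e : E) : 'M[F]_(nE S) :=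
  \matrix_(i, j) ((i == j) && (etx S i == e))%:R.

(* preimage {w | w *m D \in U} of U under D *)
Definition preim_mx (D : 'M[F]_(nE S, nV S)) (U : 'M[F]_(nV S)) : 'M[F]_(nE S) :=
  kermx (D *m cokermx U).

Definition Gamma_ht (U : 'M[F]_(nV S)) : 'M[F]_(nE S) :=
  (\sum_(e : E) (edge_space e :&: preim_mx (resH S) U :&: preim_mx (resT S) U))%MS.

Definition excess (U : 'M[F]_(nV S)) : int :=
  (\rank (Gamma_ht U))%:Z - (\rank U)%:Z.

End SheafDefs.
Arguments stalk_dimE {F V E t h} S e.
Arguments dmx {F V E t h} S.
Arguments h1 {F V E t h} S.
Arguments edge_space {F V E t h} S e.
Arguments preim_mx {F V E t h} S D U.
Arguments Gamma_ht {F V E t h} S U.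
Arguments excess {F V E t h} S U.

(* ---------- The field of rational functions F(psi) ----------
   Polynomials in k independent indeterminates, as iterated univariate
   polynomial rings, and their field of fractions. *)
Fixpoint mpoly_ring (R : idomainType) (k : nat) : idomainType :=
  match k with
  | 0 => R
  | k'.+1 => ({poly (mpoly_ring R k')} : idomainType)
  end.

Fixpoint mvar (R : idomainType) (k : nat) : 'I_k -> mpoly_ring R k :=
  match k return 'I_k -> mpoly_ring R k with
  | 0 => fun _ => 0
  | k'.+1 => fun i =>
      match unlift ord_max i with
      | Some j => (mvar R j)%:P
      | None => 'X
      end
  end.

Fixpoint mconst (R : idomainType) (k : nat) : R -> mpoly_ring R k :=
  match k return R -> mpoly_ring R k with
  | 0 => fun a => a
  | k'.+1 => fun a => (@mconst R k' a)%:P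
  end.

Definition ratfun_field (R : idomainType) (k : nat) : fieldType :=
  {fraction (mpoly_ring R k)}.

Section Twist.
Variables (F : fieldType) (V E : finType) (t h : E -> V) (S : sheaf F t h).

Definition Ftw : fieldType := ratfun_field F #|E|.

Definition to_tw (a : F) : Ftw := @FracField.tofrac (mpoly_ring F #|E|) (@mconst F #|E| a).

Definition psi (e : E) : Ftw := @FracField.tofrac (mpoly_ring F #|E|) (@mvar F #|E| (enum_rank e)).

(* twisted sheaf: head maps F(h,e), tail maps psi(e) F(t,e);
   its differential d^psi = d_h - d_t^psi over F(psi) *)
Definition dmx_twist : 'M[Ftw]_(nE S, nV S) :=
  map_mx to_tw (resH S) - diag_mx (\row_i psi (etx S i)) *m map_mx to_tw (resT S).

Definition h1_twist : nat := \rank (kermx dmx_twist).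

End Twist.
Arguments dmx_twist {F V E t h} S.
Arguments h1_twist {F V E t h} S.

From HB Require Import structures.
From mathcomp Require Import all_boot all_order all_algebra zify ring.
Set Implicit Arguments. Unset Strict Implicit. Unset Printing Implicit Defensive.
Import GRing.Theory.
Local Open Scope ring_scope.

(* Write d^psi = d_h - psi d_t over F(psi), so h_1^twist = nE - rank d^psi.
   Since each edge e owns at most one coordinate of F(E), Gamma_ht(U) is
   spanned by the unit vectors of the "supported" coordinates i, those whose
   head and tail rows both lie in U; hence excess(U) = #supported - rank U.
   - Upper bound: the supported rows of d^psi lie in U (over F(psi)) and the
     remaining rows span at most one dimension each, so
     #supported + rank d^psi <= rank U + nE.
   - Lower bound: let J be the support of ker d^psi.  Substituting
     psi(e_a) + 1 for psi(e_a) in a kernel vector with nonzero a-coordinate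
     shows that the tail row at a lies in the span of the rows of d^psi
     indexed by J, hence so does the head row.  So U = span of all head and
     tail rows at J has every coordinate of J supported and rank U at most
     rank (rows J of d^psi) <= #J - h_1^twist (rank-nullity on J). *)

Section SelectionMatrices.
Variable K : fieldType.

Definition sel_mx n (J : {set 'I_n}) : 'M[K]_n :=
  \matrix_(i, j) ((i == j) && (i \in J))%:R.

Lemma row_sel_mx n (J : {set 'I_n}) a :
  row a (sel_mx J) = if a \in J then delta_mx 0 a else 0.
Proof.
apply/rowP=> j; rewrite !mxE eq_sym; case: (a \in J); rewrite ?mxE ?andbT //.
by rewrite andbF.
Qed.

Lemma row_sel_mxM n m (J : {set 'I_n}) (A : 'M[K]_(n, m)) a :
  row a (sel_mx J *m A) = if a \in J then row a A else 0.
Proof. by rewrite row_mul row_sel_mx; case: ifP; rewrite ?mul0mx // -rowE. Qed.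

Lemma sub_sel_mx_out m n (J : {set 'I_n}) (A : 'M[K]_(m, n)) :
  (A <= sel_mx J)%MS -> forall r c, c \notin J -> A r c = 0.
Proof.
move=> /submxP[Y ->] r c cJ; rewrite mxE big1 // => k _; rewrite mxE.
by case: eqP => [->|_]; rewrite ?(negPf cJ) ?andbF mulr0.
Qed.

Lemma mul_sel_mx_id m n (J : {set 'I_n}) (A : 'M[K]_(m, n)) :
  (forall r c, c \notin J -> A r c = 0) -> A *m sel_mx J = A.
Proof.
move=> A0; apply/matrixP=> r c; rewrite !mxE (bigD1 c) //= big1 => [|k kc].
  by rewrite !mxE eqxx addr0; case: (boolP (c \in J)) => [_|/A0->]; rewrite ?mulr1 ?mulr0.
by rewrite mxE (negPf kc) mulr0.
Qed.

Lemma sel_mxC n (J : {set 'I_n}) : sel_mx J + sel_mx (~: J) = 1%:M.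
Proof.
apply/matrixP=> i j; rewrite !mxE inE.
by case: (i \in J); case: (i == j); rewrite /= ?addr0 ?add0r.
Qed.

Lemma sel_mxCM n (J : {set 'I_n}) : sel_mx (~: J) *m sel_mx J = 0.
Proof.
apply/row_matrixP=> a; rewrite row_sel_mxM inE row0.
by case: ifP => // /negPf aJ; rewrite row_sel_mx aJ.
Qed.

(* The rows of sel_mx J lie in the span of the #|J| unit vectors of J. *)
Lemma rank_sel_mx_le n (J : {set 'I_n}) : (\rank (sel_mx J) <= #|J|)%N.
Proof.
pose X : 'M[K]_(#|J|, n) := \matrix_(k, j) (enum_val k == j)%:R.
apply: leq_trans (rank_leq_row X); apply: mxrankS; apply/row_subP=> a.
rewrite row_sel_mx; case: ifP=> aJ; last exact: sub0mx.
apply/submxP; exists (delta_mx 0 (enum_rank_in aJ a)); rewrite -rowE.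
by apply/rowP=> j; rewrite !mxE enum_rankK_in // eq_sym.
Qed.

(* Both bounds rank_sel_mx_le (for J and ~: J) add up to rank 1%:M = n,
   so they are equalities. *)
Lemma rank_sel_mx n (J : {set 'I_n}) : \rank (sel_mx J) = #|J|.
Proof.
have := mxrank_add (sel_mx J) (sel_mx (~: J)); rewrite sel_mxC mxrank1.
have := rank_sel_mx_le J; have := rank_sel_mx_le (~: J).
have := cardsC J; rewrite card_ord; lia.
Qed.

Lemma rank_split_rows n m (J : {set 'I_n}) (A : 'M[K]_(n, m)) :
  (\rank A <= \rank (sel_mx J *m A) + \rank (sel_mx (~: J) *m A))%N.
Proof. by rewrite -[X in (\rank X <= _)%N]mul1mx -(sel_mxC J) mulmxDl mxrank_add. Qed.

(* Rank-nullity for the rows of A indexed by J: a family X of vectors supported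
   on J and annihilated by A has at most #|J| - rank(rows J of A) independent
   members. *)
Lemma rank_supported_kernel p n m (J : {set 'I_n}) (A : 'M[K]_(n, m))
    (X : 'M[K]_(p, n)) :
  X *m sel_mx J = X -> X *m A = 0 ->
  (\rank (sel_mx J *m A) + \rank X <= #|J|)%N.
Proof.
move=> XJ XA; set P := sel_mx (~: J).
have capX0 : \rank (X :&: P)%MS = 0%N.
  have /submxP[Y1 e1] := capmxSl X P; have /submxP[Y2 e2] := capmxSr X P.
  have <- : (X :&: P)%MS *m sel_mx J = (X :&: P)%MS by rewrite {1}e1 -mulmxA XJ -e1.
  by rewrite e2 -mulmxA sel_mxCM mulmx0 mxrank0.
have sub_ker : ((X + P)%MS <= kermx (sel_mx J *m A))%MS.
  by rewrite addsmx_sub !sub_kermx mulmxA XJ XA mulmxA sel_mxCM mul0mx !eqxx.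
have := mxrankS sub_ker; rewrite mxrank_ker.
have := mxrank_sum_cap X P; rewrite capX0 rank_sel_mx.
have := rank_leq_row (sel_mx J *m A); have := cardsC J; rewrite card_ord; lia.
Qed.

End SelectionMatrices.

(* Selection matrices are defined over the prime ring, so ring morphisms fix them. *)
Lemma map_sel_mx (K L : fieldType) (f : {rmorphism K -> L}) n (J : {set 'I_n}) :
  map_mx f (sel_mx K J) = sel_mx L J.
Proof. by apply/matrixP=> i j; rewrite !mxE rmorph_nat. Qed.

Section ConstantEmbedding.
Variables (R : idomainType) (k : nat).

Lemma mconst_is_zmod_morphism : zmod_morphism (@mconst R k).
Proof. by elim: k => [|k' IHk] a b //=; rewrite IHk rmorphB. Qed.

Lemma mconst_is_monoid_morphism : monoid_morphism (@mconst R k).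
Proof.
elim: k => [|k' [IH1 IHM]] //.
by split=> [|a b] /=; rewrite ?IH1 ?IHM ?rmorph1 ?rmorphM.
Qed.

HB.instance Definition _ := GRing.isZmodMorphism.Build R (mpoly_ring R k)
  (@mconst R k) mconst_is_zmod_morphism.
HB.instance Definition _ := GRing.isMonoidMorphism.Build R (mpoly_ring R k)
  (@mconst R k) mconst_is_monoid_morphism.

End ConstantEmbedding.

HB.instance Definition _ (F : fieldType) (E : finType) :=
  GRing.RMorphism.copy (@to_tw F E)
    (@FracField.tofrac (mpoly_ring F #|E|) \o @mconst F #|E|).

Lemma mvar_shift (R : idomainType) (k : nat) (i : 'I_k) :
  exists f : {rmorphism mpoly_ring R k -> mpoly_ring R k},
    [/\ injective f, forall a, f (mconst k a) = mconst k a,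
        forall j, j != i -> f (mvar R j) = mvar R j
      & f (mvar R i) = mvar R i + 1].
Proof.
elim: k i => [[]//|k IHk i].
case: (unliftP ord_max i) => [i' ->|->].
- have [f [f_inj fC fvar fvar_i]] := IHk i'.
  exists (map_poly f : {rmorphism {poly mpoly_ring R k} -> {poly mpoly_ring R k}}).
  split=> [||j|] /=.
  + by apply: map_inj_poly; rewrite ?rmorph0.
  + by move=> a /=; rewrite map_polyC; congr _%:P; apply: fC.
  + case: (unliftP ord_max j) => [j' ->|->] /=; rewrite ?liftK ?unlift_none.
      move=> ne; rewrite map_polyC; congr _%:P; apply: fvar.
      by apply: contraNneq ne => ->.
    by rewrite map_polyX.
  + by rewrite liftK map_polyC -polyC1 -polyCD; congr _%:P; apply: fvar_i.
- exists (comp_poly ('X + 1) : {rmorphism {poly mpoly_ring R k} -> {poly mpoly_ring R k}}).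
  have shiftK : cancel (comp_poly ('X + 1 : {poly mpoly_ring R k}))
                       (comp_poly ('X - 1)).
    move=> p; rewrite -comp_polyA comp_polyD comp_polyX -polyC1 comp_polyC.
    by rewrite subrK comp_polyXr.
  split=> [||j|] /=.
  + exact: can_inj shiftK.
  + by move=> a /=; rewrite comp_polyC.
  + case: (unliftP ord_max j) => [j' ->|->] /=; rewrite ?liftK ?comp_polyC //.
    by rewrite eqxx.
  + by rewrite unlift_none comp_polyX.
Qed.

Lemma frac_clear (R : idomainType) (x : {fraction R}) :
  exists n d : R, d != 0 /\ x * FracField.tofrac d = FracField.tofrac n.
Proof.
elim/quotW: x => r; exists (\n_r), (\d_r); have d0 := denom_ratioP r.
split => //; unlock FracField.tofrac.
rewrite -[_ * _]/(FracField.mul _ _) -FracField.pi_mul.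
apply/eqmodP; rewrite /= FracField.equivfE /FracField.mulf.
by rewrite !numden_Ratio ?mulf_neq0 ?oner_neq0 // !mulr1 mulrC.
Qed.

Lemma row_clear_denominators (R : idomainType) n (v : 'rV[{fraction R}]_n) :
  exists (c : R) (w : 'rV[R]_n),
    c != 0 /\ map_mx (@FracField.tofrac R) w = FracField.tofrac c *: v.
Proof.
have /fin_all_exists[p Hp] : forall j : 'I_n, exists p : R * R,
    p.2 != 0 /\ v 0 j * FracField.tofrac p.2 = FracField.tofrac p.1.
  by move=> j; have [a [b [b0 e]]] := frac_clear (v 0 j); exists (a, b).
exists (\prod_j (p j).2), (\row_j ((p j).1 * \prod_(k | k != j) (p k).2)).
split; first by apply/prodf_neq0 => j _; case: (Hp j).
apply/rowP=> j; rewrite !mxE [in RHS](bigD1 j) //= !rmorphM.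
have [_ vjE] := Hp j.
by rewrite [X in X * _ = _](_ : _ = v 0 j * FracField.tofrac (p j).2); [ring|rewrite vjE].
Qed.

Lemma map_tofrac_eq0 (R : idomainType) m n (A : 'M[R]_(m, n)) :
  map_mx (@FracField.tofrac R) A = 0 -> A = 0.
Proof.
move/matrixP=> A0; apply/matrixP=> i j; move: (A0 i j); rewrite !mxE.
by move/eqP; rewrite tofrac_eq0 => /eqP.
Qed.

Section SheafCohomology.
Variables (F : fieldType) (V E : finType) (t h : E -> V) (S : sheaf F t h).
Hypothesis dimE_le1 : forall e : E, (stalk_dimE S e <= 1)%N.

Local Notation nE := (nE S).
Local Notation nV := (nV S).
Local Notation H := (resH S).
Local Notation T := (resT S).

Lemma etx_inj : injective (etx S).
Proof.
move=> i j eij; apply/eqP; apply: contraT => nij.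
have sub : [set i; j] \subset [set k | etx S k == etx S i].
  by apply/subsetP=> k; rewrite !inE => /orP[]/eqP->; rewrite ?eij eqxx.
have := subset_leq_card sub; have := dimE_le1 (etx S i).
by rewrite /stalk_dimE cards2 nij; lia.
Qed.

Lemma edge_spaceE e : edge_space S e = sel_mx F [set k | etx S k == e].
Proof. by apply/matrixP=> i j; rewrite !mxE inE. Qed.

Lemma edge_space_vec e (z : 'rV[F]_nE) :
  (z <= edge_space S e)%MS -> z != 0 ->
  exists2 k, etx S k = e & z = z 0 k *: delta_mx 0 k.
Proof.
rewrite edge_spaceE => ze z0.
have zout j : etx S j != e -> z 0 j = 0.
  by move=> ej; rewrite (sub_sel_mx_out ze) // inE.
have [k zk] : exists k, z 0 k != 0.
  apply/existsP; apply: contraNT z0 => /existsPn zz.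
  by apply/eqP/rowP=> j; rewrite mxE; apply/eqP/negPn/zz.
have ek : etx S k = e by apply/eqP; apply: contraR zk => /zout->.
exists k => //; apply/rowP=> j; rewrite !mxE.
have [->|jk] := eqVneq j k; first by rewrite mulr1.
by rewrite mulr0 zout // -ek; apply: contra_neq jk => /etx_inj.
Qed.

Lemma preim_mxP (D : 'M[F]_(nE, nV)) U (z : 'rV[F]_nE) :
  (z <= preim_mx S D U)%MS = (z *m D <= U)%MS.
Proof. by rewrite /preim_mx sub_kermx mulmxA submxE. Qed.

Definition supported_edges (U : 'M[F]_nV) : {set 'I_nE} :=
  [set i | (row i H <= U)%MS && (row i T <= U)%MS].

Lemma Gamma_ht_eqmx U : (Gamma_ht S U == sel_mx F (supported_edges U))%MS.
Proof.
have sel_row k : k \in supported_edges U ->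
    ((delta_mx 0 k : 'rV[F]_nE) <= sel_mx F (supported_edges U))%MS.
  by move=> kS; have := row_sub k (sel_mx F (supported_edges U)); rewrite row_sel_mx kS.
apply/andP; split.
  apply/sumsmx_subP=> e _; apply/row_subP=> r; set z := row r _.
  have := row_sub r (edge_space S e :&: preim_mx S H U :&: preim_mx S T U)%MS.
  rewrite -/z !sub_capmx !preim_mxP -andbA => /and3P[ze zH zT].
  have [->|z0] := eqVneq z 0; first exact: sub0mx.
  have [k ek zE] := edge_space_vec ze z0.
  have zk : z 0 k != 0 by apply: contraNneq z0 => zk0; rewrite zE zk0 scale0r.
  rewrite zE scalemx_sub // sel_row // inE.
  by rewrite -(eqmx_scale _ zk) -(eqmx_scale (row k T) zk) !rowE !scalemxAl -zE zH zT.
apply/row_subP=> a; rewrite row_sel_mx; case: ifP => [|_]; last exact: sub0mx.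
rewrite inE => /andP[aH aT]; apply: (sumsmx_sup (etx S a)) => //.
rewrite !sub_capmx !preim_mxP -!rowE aH aT !andbT edge_spaceE.
by have := row_sub a (sel_mx F [set k | etx S k == etx S a]); rewrite row_sel_mx inE eqxx.
Qed.

Lemma rank_Gamma_ht U : \rank (Gamma_ht S U) = #|supported_edges U|.
Proof. by rewrite (eqmxP (Gamma_ht_eqmx U)) rank_sel_mx. Qed.

Local Notation Rk := (mpoly_ring F #|E|).
Local Notation tofrac := (@FracField.tofrac Rk).
Local Notation D := (dmx_twist S).

Lemma row_dmx_twist a : row a D =
  row a (map_mx (@to_tw F E) H) - psi F (etx S a) *: row a (map_mx (@to_tw F E) T).
Proof. by apply/rowP=> b; rewrite /dmx_twist mul_diag_mx !mxE. Qed.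

(* Upper bound: the rows of d^psi at supported edges lie in U (tensored up), the
   others contribute at most one dimension each. *)
Lemma supported_edges_bound U :
  (#|supported_edges U| + \rank D <= \rank U + nE)%N.
Proof.
set G := supported_edges U.
have rank_rows_G : (\rank (sel_mx _ G *m D) <= \rank U)%N.
  rewrite -(mxrank_map (@to_tw F E) U); apply: mxrankS; apply/row_subP=> a.
  rewrite row_sel_mxM; case: ifP => [|_]; last exact: sub0mx.
  rewrite inE => /andP[aH aT]; rewrite row_dmx_twist -scaleNr.
  by rewrite addmx_sub ?scalemx_sub // -map_row map_submx.
have rank_rows_notG : (\rank (sel_mx _ (~: G) *m D) <= #|~: G|)%N.
  by rewrite -(rank_sel_mx (Ftw F E)); apply: mxrankM_maxl.
have := rank_split_rows G D; have := cardsC G; rewrite card_ord; lia.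
Qed.

Definition dmx_poly : 'M[Rk]_(nE, nV) :=
  \matrix_(i, j) (mconst _ (H i j) - mvar F (enum_rank (etx S i)) * mconst _ (T i j)).

Lemma dmx_polyE : map_mx tofrac dmx_poly = D.
Proof. by apply/matrixP=> i j; rewrite /dmx_twist mul_diag_mx !mxE rmorphB rmorphM. Qed.

(* Substituting psi(e_a) + 1 for psi(e_a) changes dmx_poly only in row a, by
   subtracting the tail row; so it sends a polynomial kernel vector w of
   d^psi to a vector whose image is a multiple of that tail row. *)
Lemma shifted_kernel_vector (f : {rmorphism Rk -> Rk}) a (w : 'rV[Rk]_nE) :
  (forall c, f (mconst _ c) = mconst _ c) ->
  (forall j, j != enum_rank (etx S a) -> f (mvar F j) = mvar F j) ->
  f (mvar F (enum_rank (etx S a))) = mvar F (enum_rank (etx S a)) + 1 ->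
  w *m dmx_poly = 0 ->
  map_mx f w *m dmx_poly = f (w 0 a) *: row a (map_mx (@mconst F _) T).
Proof.
move=> fC fvar fvar_a wD.
pose Z : 'M[Rk]_(nE, nV) := \matrix_(i, j) (if i == a then mconst _ (T i j) else 0).
have shiftD : dmx_poly = map_mx f dmx_poly + Z.
  apply/matrixP=> i j; rewrite !mxE rmorphB rmorphM !fC.
  have [->|ia] := eqVneq i a; first by rewrite fvar_a; ring.
  rewrite fvar ?addr0 //; apply: contra_neq ia => /enum_rank_inj.
  exact: etx_inj.
rewrite [in LHS]shiftD mulmxDr -map_mxM wD map_mx0 add0r.
apply/rowP=> j; rewrite !mxE (bigD1 a) //= big1 => [|i ia].
  by rewrite !mxE eqxx addr0.
by rewrite !mxE (negPf ia) mulr0.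
Qed.

Definition kernel_support : {set 'I_nE} := [set i | [exists r, kermx D r i != 0]].

Lemma kermx_out r c : c \notin kernel_support -> kermx D r c = 0.
Proof. by rewrite inE => /existsPn /(_ r); rewrite negbK => /eqP. Qed.

Lemma kermx_supported : kermx D *m sel_mx _ kernel_support = kermx D.
Proof. exact/mul_sel_mx_id/kermx_out. Qed.

(* Clear the
   denominators of a kernel vector v with v_a != 0 and apply the substitution
   psi(e_a) -> psi(e_a) + 1, which preserves the support. *)
Lemma tail_row_in_span a : a \in kernel_support ->
  (row a (map_mx (@to_tw F E) T) <= sel_mx _ kernel_support *m D)%MS.
Proof.
rewrite inE => /existsP[r va]; set v := row r (kermx D).
have vD : v *m D = 0 by rewrite -row_mul mulmx_ker row0.
have [c [w [c0 wv]]] := row_clear_denominators v.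
have wE i : tofrac (w 0 i) = tofrac c * v 0 i.
  by move/matrixP: wv => /(_ 0 i); rewrite !mxE.
have wD : w *m dmx_poly = 0.
  apply: map_tofrac_eq0.
  by rewrite map_mxM wv dmx_polyE -scalemxAl vD scaler0.
have [f [f_inj fC fvar fvar_a]] := @mvar_shift F #|E| (enum_rank (etx S a)).
set u := map_mx tofrac (map_mx f w).
have uD : u *m D = tofrac (f (w 0 a)) *: row a (map_mx (@to_tw F E) T).
  rewrite /u -dmx_polyE -map_mxM (shifted_kernel_vector fC fvar fvar_a wD).
  by rewrite map_mxZ map_row -map_mx_comp.
have wa : w 0 a != 0.
  apply: contraNneq va => wa0; have := wE a; rewrite wa0 rmorph0 => /esym/eqP.
  by rewrite mulf_eq0 tofrac_eq0 (negPf c0) mxE.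
have ua : tofrac (f (w 0 a)) != 0 by rewrite tofrac_eq0 -(rmorph0 f) (inj_eq f_inj).
have uJ : u *m sel_mx _ kernel_support = u.
  apply: mul_sel_mx_id => r' i iJ; rewrite ord1 /u !mxE.
  have := wE i; rewrite mxE kermx_out // mulr0 => /eqP; rewrite tofrac_eq0 => /eqP->.
  by rewrite !rmorph0.
by rewrite -(eqmx_scale _ ua) -uD -uJ -mulmxA submxMl.
Qed.

Local Notation J := kernel_support.

Definition witness_space : 'M[F]_nV := <<col_mx (sel_mx F J *m H) (sel_mx F J *m T)>>%MS.

Lemma kernel_support_supported : J \subset supported_edges witness_space.
Proof.
have : (col_mx (sel_mx F J *m H) (sel_mx F J *m T) <= witness_space)%MS.
  by rewrite genmxE.
rewrite col_mx_sub => /andP[sH sT].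
apply/subsetP=> i iJ; rewrite inE.
have := row_sub i (sel_mx F J *m H); have := row_sub i (sel_mx F J *m T).
by rewrite !row_sel_mxM iJ => /submx_trans-> // /submx_trans->.
Qed.

(* Over F(psi), witness_space lies in the span of the rows of d^psi at J:
   the tail rows by tail_row_in_span, and the head rows as
   row a d^psi + psi(e_a) (tail row a). *)
Lemma witness_space_in_span : (map_mx (@to_tw F E) witness_space <= sel_mx _ J *m D)%MS.
Proof.
rewrite map_genmx genmxE map_col_mx col_mx_sub !map_mxM !map_sel_mx.
have tailJ : (sel_mx _ J *m map_mx (@to_tw F E) T <= sel_mx _ J *m D)%MS.
  apply/row_subP=> a; rewrite row_sel_mxM; case: ifP => [|_]; last exact: sub0mx.
  exact: tail_row_in_span.
rewrite tailJ andbT; apply/row_subP=> a; rewrite row_sel_mxM; case: ifP => [aJ|_].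
  have -> : row a (map_mx (@to_tw F E) H) =
      row a D + psi F (etx S a) *: row a (map_mx (@to_tw F E) T).
    by rewrite row_dmx_twist subrK.
  rewrite addmx_sub ?scalemx_sub ?tail_row_in_span //.
  by have := row_sub a (sel_mx _ J *m D); rewrite row_sel_mxM aJ.
exact: sub0mx.
Qed.

End SheafCohomology.

Theorem theorem1 (F : fieldType)
  (F_infinite : forall s : seq F, exists x : F, x \notin s)
  (V E : finType) (t h : E -> V) (S : sheaf F t h)
  (dimE_le1 : forall e : E, (stalk_dimE S e <= 1)%N) :
  (exists U : 'M[F]_(nV S), excess S U = (h1_twist S)%:Z) /\
  (forall U : 'M[F]_(nV S), excess S U <= (h1_twist S)%:Z).
Proof.
have excess_le U : excess S U <= (h1_twist S)%:Z.
  have := supported_edges_bound U.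
  rewrite /excess (rank_Gamma_ht dimE_le1) /h1_twist mxrank_ker; lia.
split => //; exists (witness_space S).
apply/eqP; rewrite Order.POrderTheory.eq_le excess_le /=.
have := subset_leq_card (kernel_support_supported S).
have := mxrankS (witness_space_in_span dimE_le1); rewrite mxrank_map.
have := rank_supported_kernel (kermx_supported S) (mulmx_ker (dmx_twist S)).
rewrite /excess (rank_Gamma_ht dimE_le1) /h1_twist; lia.
Qed.
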